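(* Let $w=i_n\cdots i_1$ be a reverse lattice word and $\sigma=\mathrm{std}(w)$. Then $T_w=P(\sigma^{-1})$.
   Context: A word $w=i_n\cdots i_1$ of positive integers is reverse lattice if in every suffix $i_k\cdots i_1$ the number of $j$'s is at least the number of $(j+1)$'s for every $j\geq1$. $\mathrm{std}(w)$: replace the letters of $w$ (read left to right) by $1,\ldots,n$, smaller letters first, equal letters increasing from left to right; a permutation in one-line notation. Partitions in French convention (rows numbered bottom to top). With $\lambda_0=\varnothing$ and $\lambda_k$ obtained from $\lambda_{k-1}$ by adding a box at the addable node in column $i_k$, $T_w$ is the tableau of shape $\lambda_n$ whose box in $\lambda_k\setminus\lambda_{k-1}$ contains $n-k+1$. $P(\pi)$ is the insertion tableau of the variant Robinson–Schensted algorithm: insert $\pi(1),\ldots,\pi(n)$ successively starting at the bottom row; if $y$ exceeds some entry of the current row, $y$ replaces the greatest entry $x<y$ of that row and $x$ is inserted into the next row up; otherwise $y$ is appended at the end of the row. *)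

From mathcomp Require Import all_boot.
Set Implicit Arguments. Unset Strict Implicit. Unset Printing Implicit Defensive.

(* A word w = i_n ... i_1 is the list [:: i_n; ...; i_1] (read left to right). *)
Definition positive_word (w : seq nat) : bool := all (fun i => 0 < i) w.

(* Every suffix i_k ... i_1 (= drop (n - k) w) has at least as many j's as (j+1)'s. *)
Definition reverse_lattice (w : seq nat) : Prop :=
  forall k j, k <= size w -> 1 <= j ->
    count_mem j.+1 (drop (size w - k) w) <= count_mem j (drop (size w - k) w).

Definition std (w : seq nat) : seq nat :=
  [seq (count (fun x => x < nth 0 w p) w + count_mem (nth 0 w p) (take p w)).+1
  | p <- iota 0 (size w)].

Definition perm_inv (s : seq nat) : seq nat :=
  [seq (index v s).+1 | v <- iota 1 (size s)].

(* Tableaux in French convention: list of rows, bottom row first; each row is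
   listed left to right; column c (1-based) is position c-1 of the rows. *)
Definition tableau := seq (seq nat).

(* Add a box containing v at the top of column c (the addable node in column c):
   the height of column c is the number of rows with at least c cells. *)
Definition add_in_col (c v : nat) (t : tableau) : tableau :=
  let h := count (fun r : seq nat => c <= size r) t in
  set_nth [::] t h (rcons (nth [::] t h) v).

(* T_w: for k = 1..n, add in column i_k the entry n-k+1. *)
Definition T_of (w : seq nat) : tableau :=
  foldl (fun t ce => add_in_col ce.1 ce.2 t) [::]
        (zip (rev w) (rev (iota 1 (size w)))).

(* Row insertion of the variant RS: if y exceeds some entry of the row, y replaces
   the greatest entry x < y and x is bumped; otherwise y is appended at the end. *)
Definition row_insert (y : nat) (r : seq nat) : option nat * seq nat :=
  let smaller := [seq x <- r | x < y] in
  if smaller is x0 :: _ then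
    let x := foldl maxn x0 smaller in
    (Some x, set_nth 0 r (index x r) y)
  else (None, rcons r y).

Fixpoint tab_insert (y : nat) (t : tableau) : tableau :=
  match t with
  | [::] => [:: [:: y]]
  | r :: t' =>
      match row_insert y r with
      | (Some x, r') => r' :: tab_insert x t'
      | (None, r') => r' :: t'
      end
  end.

Definition P_of (pi : seq nat) : tableau := foldl (fun t y => tab_insert y t) [::] pi.

From mathcomp Require Import all_boot zify.
Set Implicit Arguments. Unset Strict Implicit. Unset Printing Implicit Defensive.

(* Both tableaux have as column b, read bottom to top, the positions of the
   letter b in w in decreasing order.  T_w is built by putting the positions
   q = n, ..., 1 on top of column w_q; the lattice condition keeps the column
   lengths weakly decreasing, so each new box ends its row.  The word
   std(w)^-1 lists the positions of the 1's, then of the 2's, ..., each block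
   increasing.  Inserting the block of the letter b into the tableau whose
   columns are the blocks of the smaller letters pushes it up the bottom rows
   as a new last column: the (i+1)-st largest position of b travels up to
   row i, and to its right the lattice condition provides at least i+1
   occurrences of each smaller letter, so it is smaller than every entry it
   meets in the earlier columns. *)

Lemma iota_split m n a : m <= a < m + n ->
  iota m n = iota m (a - m) ++ a :: iota a.+1 (m + n - a.+1).
Proof.
move=> /andP[le_ma lt_a]; have {1}-> : n = a - m + (m + n - a.+1).+1 by lia.
by rewrite iotaD subnKC.
Qed.

Lemma sumn_count_mem (s r : seq nat) : uniq r ->
  sumn [seq count_mem b s | b <- r] = count (mem r) s.
Proof.
elim: r => [_|b r IH /andP[b_r /IH sum_r]] /=; first by elim: s.
rewrite sum_r {IH sum_r}; elim: s => //= x s <-; rewrite inE.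
have [-> /=|_] := eqVneq x b; first by rewrite (negbTE b_r) add0n addnA.
by rewrite /= add0n addnCA.
Qed.

Lemma filter_nil_in (T : eqType) (a : pred T) s :
  {in s, forall x, ~~ a x} -> [seq x <- s | a x] = [::].
Proof. by move=> s_a; apply/eqP; rewrite -[_ == _]negbK -has_filter; apply/hasPn. Qed.

Lemma notin_set_nth (T : eqType) (x0 : T) s n y :
  x0 \notin s -> y != x0 -> n <= size s -> x0 \notin set_nth x0 s n y.
Proof.
rewrite -!has_pred1 !has_count -!leqNgt !leqn0 count_set_nth => /eqP-> y_x0 le_n.
rewrite /= (negbTE y_x0) (_ : n - size s = 0) ?muln0 ?addn0 ?sub0n //.
by apply/eqP; rewrite subn_eq0.
Qed.

Lemma count_gt_nth_sorted s i : sorted gtn s -> i < size s ->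
  count (fun z => nth 0 s i < z) s = i.
Proof.
elim: s i => [|x s IH] i //= s_sorted.
have s_lt : {in s, forall z, z < x}.
  by apply/allP; apply: (order_path_min _ s_sorted) => a b c /=; lia.
case: i => [_|i lt_i] /=.
  by rewrite ltnn -(count_pred0 s); apply: eq_in_count => z /s_lt /=; lia.
by rewrite s_lt ?mem_nth // IH // (path_sorted s_sorted).
Qed.

Lemma gt_nth_sorted s x r : sorted gtn s ->
  r < count (fun z => x < z) s -> x < nth 0 s r.
Proof.
elim: s r => [|y s IH] r //= s_sorted.
have s_lt : {in s, forall z, z < y}.
  by apply/allP; apply: (order_path_min _ s_sorted) => a b c /=; lia.
case: r => [|r] /=; last by move=> lt_r; apply: IH (path_sorted s_sorted) _; lia.
case: (ltnP x y) => // le_yx; rewrite add0n -has_count => /hasP[z /s_lt]; lia.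
Qed.

Lemma perm_inv_index (L : seq nat) : perm_eq L (iota 1 (size L)) ->
  perm_inv [seq (index x L).+1 | x <- iota 1 (size L)] = L.
Proof.
move=> L_perm; set n := size L; set s := map _ _.
have L_uniq : uniq L by rewrite (perm_uniq L_perm) iota_uniq.
have mem_L x : (x \in L) = (0 < x <= n) by rewrite (perm_mem L_perm) mem_iota add1n ltnS.
have size_s : size s = n by rewrite size_map size_iota.
have s_uniq : uniq s.
  rewrite map_inj_in_uniq ?iota_uniq // => x y; rewrite !mem_iota add1n !ltnS -!mem_L.
  by move=> x_L y_L [eq_xy]; rewrite -(nth_index 0 x_L) eq_xy nth_index.
have nth_s x : x \in L -> nth 0 s x.-1 = (index x L).+1.
  rewrite mem_L => /andP[x_pos le_x].
  by rewrite (nth_map 0) ?size_iota ?nth_iota ?add1n ?prednK //; lia.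
rewrite /perm_inv size_s; apply: (@eq_from_nth _ 0) => [|j]; rewrite size_map size_iota // => lt_j.
rewrite (nth_map 0) ?size_iota // nth_iota // add1n.
have /[dup] x_L : nth 0 L j \in L := mem_nth 0 lt_j.
rewrite mem_L => /andP[x_pos le_x].
by rewrite -{1}(index_uniq 0 lt_j L_uniq) -nth_s // index_uniq ?size_s ?prednK // -ltnS prednK.
Qed.

Section ColumnTableaux.
Implicit Types (cols : seq (seq nat)) (t : tableau).

Definition col_row cols r : seq nat := [seq nth 0 c r | c <- cols & r < size c].

Definition col_height cols : nat := \max_(c <- cols) size c.

Definition tab_of_cols cols : tableau := mkseq (col_row cols) (col_height cols).

Lemma col_row_eq0 cols r : (col_row cols r == [::]) = (col_height cols <= r).
Proof.
rewrite -size_eq0 size_map size_filter eqn0Ngt -has_count -all_predC.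
by apply/allP/bigmax_leqP_seq => [le_r c /le_r | le_r c /le_r /(_ isT)] /=;
  rewrite -leqNgt.
Qed.

Lemma nth_tab_of_cols cols r : nth [::] (tab_of_cols cols) r = col_row cols r.
Proof.
have [lt_r|le_r] := ltnP r (col_height cols); first by rewrite nth_mkseq.
by rewrite nth_default ?size_mkseq //; apply/esym/eqP; rewrite col_row_eq0.
Qed.

Lemma nil_notin_tab_of_cols cols : [::] \notin tab_of_cols cols.
Proof.
apply/(nthP [::]) => -[r]; rewrite size_mkseq => lt_r.
by rewrite nth_mkseq // => /eqP; rewrite col_row_eq0 leqNgt lt_r.
Qed.

Lemma eq_tab_of_cols t cols : [::] \notin t ->
  (forall r, nth [::] t r = col_row cols r) -> t = tab_of_cols cols.
Proof.
move=> t_nil t_rows; have size_t : size t = col_height cols.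
  apply/eqP; rewrite eqn_leq -col_row_eq0 -t_rows nth_default // andbT leqNgt.
  apply: contra t_nil => lt_h; move: (mem_nth [::] lt_h).
  by rewrite t_rows (eqP (_ : col_row cols _ == [::])) // col_row_eq0.
apply: (@eq_from_nth _ [::]) => [|r _]; first by rewrite size_mkseq.
by rewrite t_rows nth_tab_of_cols.
Qed.

Lemma col_row_behead cols r : col_row (map behead cols) r = col_row cols r.+1.
Proof.
rewrite /col_row filter_map -map_comp.
rewrite (@eq_filter _ _ (fun c => r.+1 < size c)) => [|c /=]; last first.
  by rewrite size_behead; case: (size c).
by apply: eq_map => c /=; rewrite nth_behead.
Qed.

Lemma col_row_head cols : [::] \notin cols -> col_row cols 0 = map (head 0) cols.
Proof.
move=> cols_nil; rewrite /col_row (all_filterP _); first by apply: eq_map => -[].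
by apply/allP => c c_in; rewrite lt0n size_eq0; apply: contraNneq cols_nil => <-.
Qed.

Lemma tab_of_cols_nil : tab_of_cols [::] = [::].
Proof. by rewrite /tab_of_cols /col_height big_nil. Qed.

Lemma tab_of_cols_cons cols : 0 < col_height cols ->
  tab_of_cols cols = col_row cols 0 :: tab_of_cols (map behead cols).
Proof.
move=> h_gt0; apply/esym/eq_tab_of_cols => [|[|r] //=].
  by rewrite inE negb_or eq_sym col_row_eq0 -ltnNge h_gt0 nil_notin_tab_of_cols.
by rewrite nth_tab_of_cols col_row_behead.
Qed.

Lemma tab_of_cols_rcons_nil cols : tab_of_cols (rcons cols [::]) = tab_of_cols cols.
Proof.
apply/esym/eq_tab_of_cols => [|r]; first exact: nil_notin_tab_of_cols.
by rewrite nth_tab_of_cols /col_row filter_rcons.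
Qed.

Lemma tab_of_cols_rcons_cons cols x s : [::] \notin cols ->
  tab_of_cols (rcons cols (x :: s)) =
  rcons (map (head 0) cols) x :: tab_of_cols (rcons (map behead cols) s).
Proof.
move=> cols_nil; have rcons_nil : [::] \notin rcons cols (x :: s).
  by rewrite mem_rcons inE negb_or cols_nil.
rewrite tab_of_cols_cons; first by rewrite col_row_head // !map_rcons.
by rewrite ltnNge -col_row_eq0 col_row_head // -size_eq0 size_map size_rcons.
Qed.

Lemma add_in_col_tab_of_cols A c Z v :
  {in A, forall a, size c < size a} -> {in Z, forall z, size z <= size c} ->
  add_in_col (size A).+1 v (tab_of_cols (A ++ c :: Z)) =
  tab_of_cols (A ++ rcons c v :: Z).
Proof.
move=> A_gt Z_le; set cols := A ++ c :: Z.
have Z_row r : size c <= r -> [seq z <- Z | r < size z] = [::].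
  by move=> le_r; apply: filter_nil_in => z /Z_le le_z; rewrite -leqNgt (leq_trans le_z).
have long_row r : (size A < size (col_row cols r)) = (r < size c).
  rewrite size_map size_filter /cols count_cat /=; have [lt_r|le_r] := ltnP r (size c).
    rewrite (eq_in_count (a2 := predT)) => [|a /A_gt /(ltn_trans lt_r) //].
    by rewrite count_predT add1n -addSnnS leq_addr.
  rewrite -[count _ Z]size_filter Z_row // add0n addn0; apply/negbTE.
  by rewrite -leqNgt count_size.
have le_h : size c <= col_height cols.
  by apply: (leq_bigmax_seq (F := size)); rewrite // mem_cat mem_head orbT.
rewrite /add_in_col.
have -> : count (fun row => (size A).+1 <= size row) (tab_of_cols cols) = size c.
  rewrite /tab_of_cols /mkseq count_map (eq_count long_row) -(subnKC le_h) iotaD count_cat.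
  rewrite (eq_in_count (a2 := predT)) => [|r]; last by rewrite mem_iota.
  rewrite add0n (eq_in_count (a2 := pred0) (s := iota (size c) _)) => [|r]; last first.
    by rewrite mem_iota => /andP[le_r _]; rewrite /= ltnNge le_r.
  by rewrite count_predT count_pred0 size_iota addn0.
apply: eq_tab_of_cols => [|r].
  by rewrite notin_set_nth ?nil_notin_tab_of_cols ?size_mkseq //; case: (nth _ _ _).
rewrite nth_set_nth /=; have [lt_r|gt_r|->] := ltngtP r (size c);
  rewrite ?nth_tab_of_cols /col_row !filter_cat /= size_rcons !map_cat.
- by rewrite lt_r ltnS ltnW //= nth_rcons lt_r.
- by rewrite ltnNge ltnW // ltnS leqNgt gt_r.
- by rewrite ltnn ltnSn Z_row //= nth_rcons ltnn eqxx cats0 cats1.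
Qed.

Lemma filter_ltn_nil r y : {in r, forall x, y < x} -> [seq x <- r | x < y] = [::].
Proof.
by move=> r_gt; apply: filter_nil_in => x /r_gt lt_yx; rewrite -leqNgt ltnW.
Qed.

Lemma row_insert_append r y : {in r, forall x, y < x} -> row_insert y r = (None, rcons r y).
Proof. by move=> r_gt; rewrite /row_insert filter_ltn_nil. Qed.

Lemma row_insert_bump r y d : {in r, forall x, y < x} -> d < y ->
  row_insert y (rcons r d) = (Some d, rcons r y).
Proof.
move=> r_gt lt_dy; have d_r : d \notin r by apply/negP => /r_gt; lia.
rewrite /row_insert filter_rcons lt_dy filter_ltn_nil //= maxnn -cats1 index_cat.
rewrite (negbTE d_r) /= eqxx addn0 set_nthE size_cat addn1 ltnSn.
by rewrite take_size_cat // drop_oversize ?size_cat ?addn1 // cats1.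
Qed.

Lemma tab_insert_last_col C D y :
  {in C, forall c, size D < size c} -> sorted gtn (y :: D) ->
  {in C, forall c, forall r, r <= size D -> nth 0 (y :: D) r < nth 0 c r} ->
  tab_insert y (tab_of_cols (rcons C D)) = tab_of_cols (rcons C (y :: D)).
Proof.
elim: D y C => [|d D IH] y C C_long yD_sorted C_gt.
all: have C_nil : [::] \notin C by apply/negP => /C_long.
all: have heads_gt : {in map (head 0) C, forall x, y < x}
  by move=> _ /mapP[c c_in ->]; rewrite -nth0; apply: (C_gt c c_in 0).
- rewrite tab_of_cols_rcons_nil tab_of_cols_rcons_cons // tab_of_cols_rcons_nil.
  case: C C_nil heads_gt {C_long C_gt} => [|c C] C_nil heads_gt.
    by rewrite !tab_of_cols_nil.
  rewrite tab_of_cols_cons; last by rewrite ltnNge -col_row_eq0 col_row_head.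
  by rewrite col_row_head //= row_insert_append.
- rewrite tab_of_cols_rcons_cons //= row_insert_bump //; last by case/andP: yD_sorted.
  rewrite [RHS]tab_of_cols_rcons_cons // IH //.
  + by move=> _ /mapP[c c_in ->]; rewrite size_behead; have := C_long c c_in => /=; lia.
  + exact: path_sorted yD_sorted.
  + by move=> _ /mapP[c c_in ->] r le_r; rewrite nth_behead; apply: (C_gt c c_in r.+1).
Qed.

Lemma foldl_tab_insert_col C E : sorted gtn E ->
  {in C, forall c, size E <= size c} ->
  {in C, forall c, forall i r, i < size E -> r <= i -> nth 0 E i < nth 0 c r} ->
  foldl (fun t y => tab_insert y t) (tab_of_cols C) (rev E) = tab_of_cols (rcons C E).
Proof.
elim: E => [|e E IH] E_sorted C_long C_gt; first by rewrite tab_of_cols_rcons_nil.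
rewrite rev_cons foldl_rcons IH.
- by apply: tab_insert_last_col => // c c_in r le_r; apply: C_gt.
- exact: path_sorted E_sorted.
- by move=> c /C_long /=; lia.
- by move=> c c_in i r lt_i le_r; apply: (C_gt c c_in i.+1 r) => //; rewrite leqW.
Qed.

End ColumnTableaux.

Definition positions (w : seq nat) p b : seq nat :=
  [seq q.+1 | q <- iota p (size w - p) & nth 0 w q == b].

(* The word std(w)^-1: the positions of the letters 1, ..., M. *)
Definition positions_by_letter (w : seq nat) M : seq nat :=
  flatten [seq positions w 0 b | b <- iota 1 M].

Section Positions.
Variable w : seq nat.

Lemma map_nth_iota_drop p : drop p w = [seq nth 0 w q | q <- iota p (size w - p)].
Proof. by rewrite map_nth_iota // take_oversize // size_drop. Qed.

Lemma size_positions p b : size (positions w p b) = count_mem b (drop p w).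
Proof. by rewrite size_map size_filter (map_nth_iota_drop p) count_map. Qed.

Lemma positions_cons p b : p < size w ->
  positions w p b = (if nth 0 w p == b then [:: p.+1] else [::]) ++ positions w p.+1 b.
Proof. by move=> lt_p; rewrite /positions -(subnSK lt_p) /=; case: ifP. Qed.

Lemma sorted_positions p b : sorted ltn (positions w p b).
Proof.
apply: (homo_sorted (e := ltn)) => //; apply: sorted_filter; first exact: ltn_trans.
exact: iota_ltn_sorted.
Qed.

Lemma mem_positions p b x : x \in positions w p b ->
  exists2 q, x = q.+1 & [/\ p <= q, q < size w & nth 0 w q = b].
Proof.
case/mapP=> q; rewrite mem_filter mem_iota => /and3P[/eqP w_q le_pq lt_q] ->.
by exists q => //; split=> //; lia.
Qed.

Lemma mem_positions_nth p : p < size w -> p.+1 \in positions w 0 (nth 0 w p).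
Proof.
by move=> lt_p; rewrite mem_map ?mem_filter ?eqxx ?mem_iota ?subn0 //; exact: succn_inj.
Qed.

Lemma filter_positions v b : [seq z <- positions w 0 b | v < z] = positions w v b.
Proof.
rewrite /positions filter_map subn0; congr map; rewrite -filter_predI.
have [le_v|lt_v] := leqP v (size w); last first.
  rewrite (_ : size w - v = 0) /=; last lia.
  apply: filter_nil_in => q; rewrite mem_iota add0n => /andP[_ lt_q].
  by rewrite /= ltnS leqNgt (ltn_trans lt_q lt_v).
rewrite -{1}(subnKC le_v) iotaD filter_cat add0n filter_nil_in /=; last first.
  by move=> q; rewrite mem_iota => /andP[_ lt_q]; rewrite /= ltnS leqNgt lt_q.
by apply: eq_in_filter => q; rewrite mem_iota /= ltnS => /andP[->].
Qed.

Lemma count_gt_positions v b :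
  count (fun z => v < z) (rev (positions w 0 b)) = count_mem b (drop v w).
Proof. by rewrite count_rev -size_filter filter_positions size_positions. Qed.

Lemma index_positions p : p < size w ->
  index p.+1 (positions w 0 (nth 0 w p)) = count_mem (nth 0 w p) (take p w).
Proof.
move=> lt_p; rewrite /positions index_map; last exact: succn_inj.
rewrite subn0 (iota_split (a := p)) ?add0n // filter_cat index_cat mem_filter mem_iota.
rewrite !subn0 add0n ltnn !andbF /= eqxx /= eqxx addn0 size_filter.
by rewrite -(map_nth_iota0 0 (ltnW lt_p)) count_map.
Qed.

Lemma size_flatten_positions r : uniq r ->
  size (flatten [seq positions w 0 b | b <- r]) = count (mem r) w.
Proof.
move=> r_uniq; rewrite size_flatten /shape -map_comp -sumn_count_mem //.
by congr sumn; apply: eq_map => b /=; rewrite size_positions drop0.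
Qed.

End Positions.

Section ReverseLattice.
Variable w : seq nat.
Hypothesis w_lattice : reverse_lattice w.

Lemma reverse_lattice_count v a b : 0 < a <= b ->
  count_mem b (drop v w) <= count_mem a (drop v w).
Proof.
case/andP=> a_pos le_ab; rewrite -(subnKC le_ab); elim: (b - a) => [|d IH].
  by rewrite addn0.
apply: leq_trans IH; rewrite addnS.
have [le_v|lt_v] := leqP v (size w); last by rewrite drop_oversize ?(ltnW lt_v).
by have := w_lattice (leq_subr v (size w)) (leq_trans a_pos (leq_addr d a)); rewrite subKn.
Qed.

Lemma reverse_lattice_count_after q b : q < size w -> 0 < b < nth 0 w q ->
  count_mem (nth 0 w q) (drop q.+1 w) < count_mem b (drop q.+1 w).
Proof.
move=> lt_q /andP[b_pos lt_b]; have := reverse_lattice_count q (a := b) (b := nth 0 w q).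
by rewrite (drop_nth 0 lt_q) /= eqxx (gtn_eqF lt_b) b_pos ltnW //; apply.
Qed.

Lemma P_of_positions_by_letter K :
  P_of (positions_by_letter w K) = tab_of_cols [seq rev (positions w 0 b) | b <- iota 1 K].
Proof.
rewrite /P_of /positions_by_letter; elim: K => [|K IH]; first by rewrite tab_of_cols_nil.
rewrite -[K.+1]addn1 iotaD !map_cat flatten_cat foldl_cat IH /= cats0 cats1.
set E := rev (positions w 0 (1 + K)).
have E_sorted : sorted gtn E by rewrite rev_sorted; apply: sorted_positions.
rewrite -{1}(revK (positions w 0 _)) -/E.
apply: foldl_tab_insert_col => // _ /mapP[b b_in ->]; move: b_in; rewrite mem_iota => b_in.
  by rewrite /E !size_rev !size_positions; apply: reverse_lattice_count => //; lia.
move=> i r lt_i le_ri; apply: gt_nth_sorted; first by rewrite rev_sorted; apply: sorted_positions.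
have [q def_x [_ lt_q w_q]] : exists2 q, nth 0 E i = q.+1 &
    [/\ 0 <= q, q < size w & nth 0 w q = 1 + K].
  by apply: mem_positions; rewrite -mem_rev mem_nth.
have count_E : count_mem (1 + K) (drop q.+1 w) = i.
  by rewrite -count_gt_positions -/E -def_x count_gt_nth_sorted.
rewrite def_x count_gt_positions.
by have := reverse_lattice_count_after lt_q (b := b); rewrite w_q count_E; lia.
Qed.

End ReverseLattice.

Section BoundedWord.
Variables (w : seq nat) (M : nat).
Hypotheses (w_pos : positive_word w) (w_lattice : reverse_lattice w).
Hypothesis w_le_M : {in w, forall x, x <= M}.

Lemma nth_letter_range q : q < size w -> 0 < nth 0 w q <= M.
Proof.
move=> lt_q; have w_q : nth 0 w q \in w by rewrite mem_nth.
by rewrite w_le_M // andbT; apply: (allP w_pos).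
Qed.

Lemma add_in_col_positions p : p < size w ->
  add_in_col (nth 0 w p) p.+1 (tab_of_cols [seq rev (positions w p.+1 b) | b <- iota 1 M]) =
  tab_of_cols [seq rev (positions w p b) | b <- iota 1 M].
Proof.
move=> lt_p; have /andP[a_pos a_le_M] := nth_letter_range lt_p; set a := nth 0 w p.
have -> : iota 1 M = iota 1 a.-1 ++ a :: iota a.+1 (M - a).
  by rewrite (iota_split (a := a)) ?subn1 ?add1n ?subSS //; lia.
have positions_other b : b != a -> positions w p b = positions w p.+1 b.
  by move=> ne_ba; rewrite positions_cons // eq_sym (negbTE ne_ba).
rewrite !map_cat /= (positions_cons a lt_p) eqxx rev_cons.
set A := map _ (iota 1 a.-1); set Z := map _ (iota a.+1 _).
have -> : [seq rev (positions w p b) | b <- iota 1 a.-1] = A.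
  by apply/eq_in_map => b; rewrite mem_iota => lt_b; rewrite positions_other //; lia.
have -> : [seq rev (positions w p b) | b <- iota a.+1 (M - a)] = Z.
  by apply/eq_in_map => b; rewrite mem_iota => lt_b; rewrite positions_other //; lia.
have {1}-> : a = (size A).+1 by rewrite size_map size_iota prednK.
rewrite add_in_col_tab_of_cols // => _ /mapP[b b_in ->]; move: b_in; rewrite mem_iota => b_in.
- by rewrite !size_rev !size_positions; apply: reverse_lattice_count_after => //; lia.
- by rewrite !size_rev !size_positions; apply: reverse_lattice_count => //; lia.
Qed.

Lemma foldl_add_in_col_positions p : p <= size w ->
  foldl (fun t ce => add_in_col ce.1 ce.2 t) [::]
    [seq (nth 0 w q, q.+1) | q <- rev (iota p (size w - p))] =
  tab_of_cols [seq rev (positions w p b) | b <- iota 1 M].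
Proof.
move def_k : (size w - p) => k; elim: k p def_k => [|k IH] p def_k le_p.
  by rewrite /positions def_k /= /tab_of_cols /col_height big_map big1.
have lt_p : p < size w by lia.
by rewrite /= rev_cons map_rcons foldl_rcons IH ?add_in_col_positions //; lia.
Qed.

Lemma T_of_positions : T_of w = tab_of_cols [seq rev (positions w 0 b) | b <- iota 1 M].
Proof.
rewrite /T_of -rev_zip ?size_iota // -{1}(mkseq_nth 0 w) /mkseq (iotaDl 1 0) zip_map.
by rewrite -map_rev -(foldl_add_in_col_positions (leq0n _)) subn0.
Qed.

Lemma size_positions_by_letter : size (positions_by_letter w M) = size w.
Proof.
rewrite size_flatten_positions ?iota_uniq // -[RHS]count_predT.
apply: eq_in_count => x x_w.
by rewrite /= mem_iota add1n ltnS w_le_M // andbT (allP w_pos).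
Qed.

Lemma mem_positions_by_letter x : (x \in positions_by_letter w M) = (x \in iota 1 (size w)).
Proof.
rewrite mem_iota add1n ltnS; apply/flattenP/idP => [[_ /mapP[b _ ->]]|/andP[x_pos le_x]].
  by case/mem_positions => q -> [_ lt_q _].
have lt_x : x.-1 < size w by lia.
exists (positions w 0 (nth 0 w x.-1)); last by rewrite -{1}(prednK x_pos) mem_positions_nth.
by apply: map_f; rewrite mem_iota add1n ltnS; apply: nth_letter_range.
Qed.

Lemma perm_positions_by_letter :
  perm_eq (positions_by_letter w M) (iota 1 (size (positions_by_letter w M))).
Proof.
rewrite size_positions_by_letter; apply: uniq_perm; last 2 first.
- exact: iota_uniq.
- exact: mem_positions_by_letter.
rewrite (uniq_size_uniq (iota_uniq 1 (size w))) ?size_iota ?size_positions_by_letter //.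
by move=> x; rewrite mem_positions_by_letter.
Qed.

Lemma index_positions_by_letter p : p < size w ->
  index p.+1 (positions_by_letter w M) =
  count (fun x => x < nth 0 w p) w + count_mem (nth 0 w p) (take p w).
Proof.
move=> lt_p; have /andP[a_pos a_le_M] := nth_letter_range lt_p; set a := nth 0 w p.
rewrite /positions_by_letter (iota_split (a := a)) ?add1n //; last lia.
rewrite map_cat flatten_cat /= index_cat.
have -> : p.+1 \in flatten [seq positions w 0 b | b <- iota 1 (a - 1)] = false.
  apply/flattenP => -[_ /mapP[b b_in ->] /mem_positions[q /succn_inj <- [_ _ w_q]]].
  by move: b_in; rewrite mem_iota -w_q; lia.
rewrite index_cat mem_positions_nth // index_positions // size_flatten_positions ?iota_uniq //.
congr (_ + _); apply: eq_in_count => x x_w.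
by rewrite /= mem_iota subnKC // (allP w_pos).
Qed.

Lemma std_index : std w =
  [seq (index x (positions_by_letter w M)).+1 | x <- iota 1 (size w)].
Proof.
rewrite /std (iotaDl 1 0 (size w)) -map_comp; apply/eq_in_map => p.
by rewrite mem_iota => /andP[_ lt_p] /=; rewrite index_positions_by_letter.
Qed.

End BoundedWord.

Theorem corollary8p3 (w : seq nat) :
  positive_word w -> reverse_lattice w ->
  T_of w = P_of (perm_inv (std w)).
Proof.
move=> w_pos w_lattice; set M := \max_(x <- w) x.
have w_le_M : {in w, forall x, x <= M} by move=> x x_w; apply: (leq_bigmax_seq (F := id)).
rewrite (T_of_positions w_pos w_lattice w_le_M) (std_index w_pos w_le_M).
rewrite -(size_positions_by_letter w_pos w_le_M) perm_inv_index.
  by rewrite P_of_positions_by_letter.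
exact: perm_positions_by_letter.
Qed.
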